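(* Let $f_i$ and $f_j$ be Poisson finite set densities on finite subsets of $\mathbb{R}^d$ with parameters (expected numbers of objects) $\lambda_i,\lambda_j>0$ and localisation densities $\rho_i,\rho_j$ on $\mathbb{R}^d$, and let $\omega\in[0,1]$. Let $z_\omega=\int_{\mathbb{R}^d}\rho_i^{(1-\omega)}(x)\rho_j^{\omega}(x)\,\mathrm{d}x$ and let $\lambda_\omega=\lambda_i^{(1-\omega)}\lambda_j^{\omega}z_\omega$ be the expected number of objects of their exponential mixture density with weight $\omega$. Then $$\lambda_\omega<\min\{\lambda_i,\lambda_j\}$$ holds whenever $$z_\omega<\frac{\min\{\lambda_i,\lambda_j\}}{\max\{\lambda_i,\lambda_j\}}.$$
   Context: A Poisson finite set density with parameter $\lambda>0$ and localisation (probability) density $\rho$ on $\mathbb{R}^d$ has Poisson cardinality distribution with mean $\lambda$ and, given cardinality $n$, localisation density $\rho_n(x_1,\ldots,x_n)=\prod_{k=1}^n\rho(x_k)$. The exponential mixture density with weight $\omega$ is $f_\omega\propto f_i^{1-\omega}f_j^{\omega}$, normalised with respect to the set integral; it is Poisson with parameter $\lambda_\omega$ as in the claim. *)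

From HB Require Import structures.
From mathcomp Require Import all_boot all_order all_algebra.
From mathcomp Require Import all_classical all_reals all_analysis.
Set Implicit Arguments. Unset Strict Implicit. Unset Printing Implicit Defensive.
Import Order.TTheory GRing.Theory Num.Theory.
Local Open Scope ring_scope.
Local Open Scope ereal_scope.

(* Points of R^d are represented by d.-tuple R, which carries the product
   (= Borel) sigma-algebra of the library.  The Lebesgue integral over R^d of a
   nonnegative measurable function is the d-fold iterated integral w.r.t. the
   one-dimensional Lebesgue measure (Tonelli). *)
Fixpoint lebesgue_int_Rd (R : realType) (d : nat) :
    (d.-tuple R -> \bar R) -> \bar R :=
  match d return (d.-tuple R -> \bar R) -> \bar R with
  | 0 => fun f => f [tuple]
  | n.+1 => fun f =>
      \int[@lebesgue_measure R]_(x in [set: R])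
         lebesgue_int_Rd (fun t : n.-tuple R => f [tuple of x :: t])
  end.

Definition is_density (R : realType) (d : nat) (rho : d.-tuple R -> R) : Prop :=
  [/\ measurable_fun [set: d.-tuple R] rho,
      (forall x, (0 <= rho x)%R) &
      lebesgue_int_Rd (fun x => (rho x)%:E) = 1].

Definition z_omega (R : realType) (d : nat) (rho_i rho_j : d.-tuple R -> R)
    (omega : R) : \bar R :=
  lebesgue_int_Rd (fun x => (powR (rho_i x) (1 - omega) * powR (rho_j x) omega)%:E).

Definition lambda_omega (R : realType) (d : nat) (lam_i lam_j : R)
    (rho_i rho_j : d.-tuple R -> R) (omega : R) : \bar R :=
  (powR lam_i (1 - omega) * powR lam_j omega)%:E * z_omega rho_i rho_j omega.

From HB Require Import structures.
From mathcomp Require Import all_boot all_order all_algebra.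
From mathcomp Require Import all_classical all_reals all_analysis.
Import Order.TTheory GRing.Theory Num.Theory.
Local Open Scope ring_scope.

(* The coefficient lam_i^(1 - omega) lam_j^omega of lambda_omega is a weighted
   geometric mean of lam_i and lam_j, hence at most max(lam_i, lam_j), so the
   hypothesis on z_omega gives lambda_omega < max * (min / max) = min. *)

(* M > 0 is needed: 0^0 = 1 in powR. *)
Lemma geomean_powR_le (R : realType) (a b M w : R) :
  0 < M -> 0 <= a <= M -> 0 <= b <= M -> 0 <= w <= 1 ->
  a `^ (1 - w) * b `^ w <= M.
Proof.
move=> M0 /andP[a0 aM] /andP[b0 bM] /andP[w0 w1].
have -> : M = M `^ (1 - w) * M `^ w.
  by rewrite -powRD ?subrK ?powRr1 ?ltW // gt_eqF ?implybT.
by rewrite ler_pM ?powR_ge0 // ge0_ler_powR ?subr_ge0 ?nnegrE // ltW.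
Qed.

Local Open Scope ereal_scope.

Lemma EFin_mule_lt_of_lt_div (R : realType) (c M m : R) (z : \bar R) :
  (0 < c)%R -> (c <= M)%R -> (0 < m)%R -> z < (m / M)%:E -> c%:E * z < m%:E.
Proof.
move=> c0 cM m0; have M0 := lt_le_trans c0 cM.
case: z => [r| |] //=; last by move=> _; rewrite mulrNy gtr0_sg // mul1e ltNyr.
rewrite -EFinM !lte_fin => rmM.
have [r0|r0] := leP r 0%R; first by rewrite (le_lt_trans _ m0) // pmulr_rle0.
by rewrite (le_lt_trans (ler_wpM2r (ltW r0) cM)) // mulrC -ltr_pdivlMr.
Qed.

Theorem proposition2 (R : realType) (d : nat) (lam_i lam_j : R)
    (rho_i rho_j : d.-tuple R -> R) (omega : R) :
  (0 < lam_i)%R -> (0 < lam_j)%R ->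
  is_density rho_i -> is_density rho_j ->
  (0 <= omega <= 1)%R ->
  z_omega rho_i rho_j omega < (Num.min lam_i lam_j / Num.max lam_i lam_j)%:E ->
  lambda_omega lam_i lam_j rho_i rho_j omega < (Num.min lam_i lam_j)%:E.
Proof.
move=> li lj _ _ w01 hz.
rewrite /lambda_omega; apply: EFin_mule_lt_of_lt_div hz.
- by rewrite mulr_gt0 // powR_gt0.
- apply: geomean_powR_le w01; first by rewrite lt_max li.
    by rewrite (ltW li) le_max lexx.
  by rewrite (ltW lj) le_max lexx orbT.
- by rewrite lt_min li lj.
Qed.
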